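(* Let $G$ be a finite group, $A_0=\operatorname{Aut}(G)$, and let $S_0$ be an $\mathcal{L}(A_0)$-system over $G$ in the variables $Y=\{y_{ij}\mid i\in\mathbb{Z},1\le j\le n\}$. Then for every finite $Z\subseteq Y$ there exists a finite subsystem $S_1\subseteq S_0$ which is $Z$-equivalent to $S_0$.
   Context: $\mathcal{L}(A_0)$ is the group language $\{\cdot,{}^{-1},1\}$ with a unary function symbol for each $\phi\in A_0$, interpreted as $\phi$; an $\mathcal{L}(A_0)$-equation in $Y$ is $t=1$ for a term $t$ involving finitely many variables of $Y$, a system is any set of such equations, and its solution set $V_G(S)$ consists of the points $(p_{ij}\mid i\in\mathbb{Z},1\le j\le n)\in G^{Y}$ satisfying all its equations. Two systems $S_0,S_1$ in variables $Y$ are $Z$-equivalent ($Z\subseteq Y$) if the projections of $V_G(S_0)$ and $V_G(S_1)$ onto the coordinates in $Z$ coincide. *)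

From HB Require Import structures.
From mathcomp Require Import all_boot all_order all_algebra all_fingroup.
Set Implicit Arguments. Unset Strict Implicit. Unset Printing Implicit Defensive.

(* Variables Y = { y_ij | i in Z, 1 <= j <= n }, encoded as int * 'I_n
   (the index j is shifted to 0 <= j < n). *)
Definition var (n : nat) : Type := (int * 'I_n)%type.

Definition autsym (gT : finGroupType) : Type :=
  {phi : {perm gT} | phi \in Aut [set: gT]}.

Inductive term (gT : finGroupType) (n : nat) : Type :=
  | TVar of var n
  | TOne
  | TMul of term gT n & term gT n
  | TInv of term gT n
  | TApp of autsym gT & term gT n.

Fixpoint eval_term (gT : finGroupType) (n : nat) (p : var n -> gT)
    (t : term gT n) : gT :=
  match t with
  | TVar y => p y
  | TOne => 1%g
  | TMul t1 t2 => (eval_term p t1 * eval_term p t2)%g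
  | TInv t1 => ((eval_term p t1)^-1)%g
  | TApp phi t1 => (sval phi) (eval_term p t1)
  end.

(* An equation t = 1 is represented by its term t; a system is a set of terms. *)
Definition system (gT : finGroupType) (n : nat) := term gT n -> Prop.

Definition solutions (gT : finGroupType) (n : nat) (S : system gT n)
    : (var n -> gT) -> Prop :=
  fun p => forall t, S t -> eval_term p t = 1%g.

Definition Z_equivalent (gT : finGroupType) (n : nat) (Z : var n -> Prop)
    (S0 S1 : system gT n) : Prop :=
  forall q : var n -> gT,
    (exists2 p, solutions S0 p & forall z, Z z -> p z = q z) <->
    (exists2 p, solutions S1 p & forall z, Z z -> p z = q z).

(* Propositional membership in a finite list (terms have no eqType here). *)
Fixpoint inseq (T : Type) (x : T) (s : seq T) : Prop :=
  match s with
  | [::] => False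
  | y :: s' => y = x \/ inseq x s'
  end.

From Stdlib Require Import Classical IndefiniteDescription.
From mathcomp Require Import all_boot all_order all_algebra all_fingroup.

Set Implicit Arguments. Unset Strict Implicit. Unset Printing Implicit Defensive.

(* G^Y is compact: it is a product of finite spaces over the countable index
   set Y, and every equation, like the condition of having a prescribed
   projection w onto Z, involves only finitely many coordinates.  Hence if w is
   not in the Z-projection of V_G(S0), some finite subsystem S_w of S0 already
   excludes w; as G^Z is finite, the union of the S_w is the required S1.
   Compactness is proved by Koenig's argument: enumerate Y and fix coordinates
   one at a time, keeping every finite subfamily satisfiable by a point that
   takes the values fixed so far. *)

Lemma inseqP (T : eqType) (x : T) (s : seq T) : reflect (inseq x s) (x \in s).
Proof.
elim: s => [|y s IHs] /=; first by right.
by rewrite in_cons; apply: (iffP orP) => [[/eqP-> | /IHs] | [<- | /IHs]]; auto.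
Qed.

Lemma inseq_cat (T : Type) (x : T) (s1 s2 : seq T) :
  inseq x (s1 ++ s2) <-> inseq x s1 \/ inseq x s2.
Proof. by elim: s1 => [|y s1 IHs1] /=; [intuition | rewrite IHs1; intuition]. Qed.

Lemma inseq_flatten (A : eqType) (T : Type) (F : A -> seq T) (l : seq A) (x : T) :
  inseq x (flatten [seq F a | a <- l]) <-> exists2 a, a \in l & inseq x (F a).
Proof.
elim: l => [|b l IHl] /=; first by split=> // -[].
rewrite inseq_cat IHl; split=> [[xFb | [a al xFa]] | [a]].
- by exists b; rewrite ?mem_head.
- by exists a; rewrite // in_cons al orbT.
- by rewrite in_cons => /orP[/eqP-> | al] xFa; [left | right; exists a].
Qed.

Lemma inseq_pmap_id (T : Type) (x : T) (s : seq (option T)) :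
  inseq x (pmap id s) <-> inseq (Some x) s.
Proof.
elim: s => [|[y|] s IHs] //=; rewrite IHs.
  by split=> [[-> | ?] | [[->] | ?]]; auto.
by split=> [? | [] //]; right.
Qed.

Section Compactness.

Variables (V : countType) (G : finType) (I : Type).
Variables (S : I -> Prop) (c : I -> (V -> G) -> Prop) (supp : I -> seq V).
Hypothesis c_local : forall i p q, {in supp i, p =1 q} -> c i p -> c i q.

Let subfamily (F : seq I) := forall i, inseq i F -> S i.
Let satisfies (p : V -> G) (F : seq I) := forall i, inseq i F -> c i p.

Definition extendable (k : nat) (f : V -> G) :=
  forall F, subfamily F ->
    exists2 p, satisfies p F & forall v, pickle v < k -> p v = f v.

Lemma extendable_skip k f :
  @pickle_inv V k = None -> extendable k f -> extendable k.+1 f.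
Proof.
move=> k_free ext F /ext[p pF pf]; exists p => // v.
rewrite ltnS leq_eqVlt => /orP[/eqP vk | /pf //].
by move: k_free; rewrite -vk pickleK_inv.
Qed.

Lemma extendable_update k f v : pickle v = k -> extendable k f ->
  exists g, extendable k.+1 (fun u => if u == v then g else f u).
Proof.
(* If no g works, each g has a finite subfamily Fg g witnessing failure; a point p
   satisfying all of them and agreeing with f below k contradicts the witness
   for g = p v. *)
move=> vk ext; apply: NNPP => no_g.
have bad g : exists F, subfamily F /\ forall p, satisfies p F ->
    ~ forall u, pickle u < k.+1 -> p u = (if u == v then g else f u).
  apply: NNPP => no_F; apply: no_g; exists g => F sF; apply: NNPP => no_p.
  by apply: no_F; exists F; split=> // p pF pg; apply: no_p; exists p.
have [Fg Fg_bad] := functional_choice _ bad.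
have [|p pF pf] := ext (flatten [seq Fg g | g <- enum G]).
  by move=> i /inseq_flatten[g _ /(proj1 (Fg_bad g))].
apply: (proj2 (Fg_bad (p v)) p).
  by move=> i iF; apply: pF; apply/inseq_flatten; exists (p v); rewrite ?mem_enum.
move=> u uk; case: eqP => [-> // | /eqP uv]; apply: pf.
by rewrite ltn_neqAle -ltnS uk andbT -vk (inj_eq (pcan_inj (@pickleK _))).
Qed.

Lemma extendableS k f : extendable k f ->
  exists f', extendable k.+1 f' /\ forall v, pickle v < k -> f' v = f v.
Proof.
case kv: (@pickle_inv V k) => [v|] ext; last by exists f; split; first exact: extendable_skip.
have vk : pickle v = k by have := @pickle_invK V k; rewrite kv.
have [g ext'] := extendable_update vk ext.
exists (fun u => if u == v then g else f u); split=> // u uk.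
by case: eqP => // uv; rewrite uv vk ltnn in uk.
Qed.

Theorem compactness : (forall F, subfamily F -> exists p, satisfies p F) ->
  exists p, forall i, S i -> c i p.
Proof.
move=> fin_sat.
have [p0 _] := fin_sat [::] (fun _ => False_ind _).
have ext0 f : extendable 0 f by move=> F /fin_sat[p pF]; exists p.
have step k f : exists f', extendable k f ->
    extendable k.+1 f' /\ forall v, pickle v < k -> f' v = f v.
  case: (classic (extendable k f)) => [/extendableS[f' ?] | ?]; first by exists f'.
  by exists f.
have [next nextP] := functional_choice _ (fun k => functional_choice _ (step k)).
pose chain k := iteri k next p0.
have chain_ext k : extendable k (chain k).
  by elim: k => [|k IHk]; [exact: ext0 | exact: (nextP _ _ IHk).1].
have chain_stable k m v : k <= m -> pickle v < k -> chain m v = chain k v.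
  move=> /subnK <- vk; elim: (m - k) => //= d IHd.
  by rewrite (nextP _ _ (chain_ext _)).2 // (leq_trans vk) ?leq_addl.
exists (fun v => chain (pickle v).+1 v) => i Si.
pose K := \max_(v <- supp i) (pickle v).+1.
have supp_ltK v : v \in supp i -> pickle v < K.
  by move=> vi; apply: (leq_bigmax_seq v vi).
have [|p ip pK] := chain_ext K [:: i]; first by move=> j [<- | []].
apply: (c_local _ (ip i (or_introl erefl))) => v vi.
by rewrite pK ?supp_ltK // (chain_stable _ _ _ (supp_ltK v vi)).
Qed.

End Compactness.

Section Terms.

Variables (gT : finGroupType) (n : nat).

Fixpoint vars (t : term gT n) : seq (var n) :=
  match t with
  | TVar y => [:: y]
  | TOne => [::]
  | TMul t1 t2 => vars t1 ++ vars t2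
  | TInv t1 => vars t1
  | TApp _ t1 => vars t1
  end.

Lemma eq_in_eval_term (p q : var n -> gT) (t : term gT n) :
  {in vars t, p =1 q} -> eval_term p t = eval_term q t.
Proof.
elim: t => [y | | t1 IH1 t2 IH2 | t1 IH1 | phi t1 IH1] //= pq.
- by apply: pq; rewrite mem_head.
- by rewrite IH1 ?IH2 // => v vt; apply: pq; rewrite mem_cat vt ?orbT.
- by rewrite IH1.
- by rewrite IH1.
Qed.

Variables (S0 : system gT n) (Z : seq (var n)).

Definition in_proj (S : system gT n) (w : seq gT) :=
  exists2 p, solutions S p & map p Z = w.

Definition subsystem (F : seq (term gT n)) := forall t, inseq t F -> S0 t.

Lemma in_proj_compact w :
  (forall F, subsystem F -> in_proj (fun t => inseq t F) w) -> in_proj S0 w.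
Proof.
move=> fin.
pose c o p := oapp (fun t => eval_term p t = 1%g) (map p Z = w) o.
have c_local o p q : {in oapp vars Z o, p =1 q} -> c o p -> c o q.
  by case: o => [t|] /= pq; [rewrite (eq_in_eval_term pq) | move/eq_in_map: pq <-].
have [F SF | p pS] := compactness (S := oapp S0 True) c_local.
  have [|p pF pZ] := fin (pmap id F).
    by move=> t /inseq_pmap_id /SF.
  by exists p => -[t|] // /inseq_pmap_id /pF.
by exists p; [move=> t /(pS (Some t)) | exact: pS None I].
Qed.

Lemma separating_subsystem w : exists F, subsystem F /\
  (in_proj S0 w \/ ~ in_proj (fun t => inseq t F) w).
Proof.
case: (classic (in_proj S0 w)) => [w_S0 | w_notS0].
  by exists [::]; split=> [? [] | ]; left.
apply: NNPP => no_F; apply/w_notS0/in_proj_compact => F sF.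
by apply: NNPP => w_notF; apply: no_F; exists F; auto.
Qed.

End Terms.

Theorem lemma3 (gT : finGroupType) (n : nat) (S0 : system gT n)
    (Z : seq (var n)) :
  exists S1 : seq (term gT n),
    (forall t, inseq t S1 -> S0 t) /\
    Z_equivalent (fun z => inseq z Z) (fun t => inseq t S1) S0.
Proof.
have [Fw Fw_sep] := functional_choice _
  (fun w : (size Z).-tuple gT => separating_subsystem S0 Z w).
pose S1 := flatten [seq Fw w | w <- enum {: (size Z).-tuple gT}].
have S1_sub : subsystem S0 S1.
  by move=> t /inseq_flatten[w _ /(proj1 (Fw_sep w))].
exists S1; split=> // q.
have agreeE p : (forall z, inseq z Z -> p z = q z) <-> map p Z = map q Z.
  by rewrite -eq_in_map; split=> pq z /inseqP; apply: pq.
split=> -[p pS /agreeE pq]; last by exists p => [t /S1_sub | ]; [apply: pS | apply/agreeE].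
have [_ [[p' p'S p'Z] | w_notF]] := Fw_sep (map_tuple p (in_tuple Z)).
  by exists p' => //; apply/agreeE; rewrite p'Z.
exfalso; apply: w_notF; exists p => // t tF; apply: pS; apply/inseq_flatten.
by exists (map_tuple p (in_tuple Z)); rewrite ?mem_enum.
Qed.
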